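(* Let $G=(V,E)$ be a finite, simple, connected, undirected graph with vertices $v_1,\dots,v_n$, adjacency matrix $\mathbf{A}$, degree vector $\mathbf{d}=\mathbf{A}\mathbf{1}$, degree matrix $\mathbf{D}=\mathrm{diag}(\mathbf{d})$, and lazy random walk matrix $\mathbf{P}=\tfrac12(\mathbf{I}+\mathbf{A}\mathbf{D}^{-1})$. Fix a vertex $v\in V$, a non-negative signal $\mathbf{x}\in\mathbb{R}^n$ (all entries $\ge 0$), a constant $c>1$, a positive integer $N$, and $\epsilon>0$. Then there exists $K\in\mathbb{N}$ such that the following holds. Let $\mathcal{F}=\mathcal{F}_{\mathrm{A}}\sqcup\mathcal{F}_{\mathrm{C}}$ be any finite, non-empty filter bank (non-decoupled architecture) in which every aggregation filter $f\in\mathcal{F}_{\mathrm{A}}$ is of the form $F_k(\mathbf{x})=\mathbf{P}^k\mathbf{x}$ with $k\ge K$, every comparison filter $f\in\mathcal{F}_{\mathrm{C}}$ is of the form $F_{k_1,k_2}(\mathbf{x})=(\mathbf{P}^{k_1}-\mathbf{P}^{k_2})\mathbf{x}$ with $k_1\neq k_2$ and $k_1,k_2\ge K$, and $|\mathcal{F}_{\mathrm{C}}|\le N$; write $\mathbf{h}_f=f(\mathbf{x})\in\mathbb{R}^n$. Let $(\bar{\mathbf{s}}_f[v])_{f\in\mathcal{F}}$ be any non-negative attention weights at $v$ such that the representation is $c$-band-dominant at $v$, i.e. $$\max\{\bar{\mathbf{s}}_f[v]: f\in\mathcal{F}_{\mathrm{C}}\}=c\cdot\max\{\bar{\mathbf{s}}_f[v]: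 f\in\mathcal{F}_{\mathrm{A}}\}.$$ Then $$\sum_{f\in\mathcal{F}_{\mathrm{C}}}\bar{\mathbf{s}}_f[v]\,\mathbf{h}_f[v]\;\le\;\epsilon\, c\sum_{f\in\mathcal{F}_{\mathrm{A}}}\bar{\mathbf{s}}_f[v]\,\mathbf{h}_f[v].$$
   Context: In the ''non-decoupled architecture'' the filter responses are taken without any learned transformation (the map applied after filtering is the identity), and a single set of normalized attention weights $\bar{\mathbf{s}}_f[v]$ (e.g. a softmax over the whole filter bank, hence non-negative) is assigned at each vertex to all filters in $\mathcal{F}=\mathcal{F}_{\mathrm{A}}\sqcup\mathcal{F}_{\mathrm{C}}$. Aggregation filters $F_k$ are low-pass filters and comparison filters $F_{k_1,k_2}$ are band-pass (diffusion-wavelet) filters. For $\mathbf{x}\in\mathbb{R}^n$, $\mathbf{h}_f[v]$ denotes the entry of $\mathbf{h}_f$ at vertex $v$. *)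

From HB Require Import structures.
From mathcomp Require Import all_boot all_order all_algebra.
Set Implicit Arguments. Unset Strict Implicit. Unset Printing Implicit Defensive.
Import Order.TTheory GRing.Theory Num.Theory.
Local Open Scope ring_scope.

Definition simple_graph (n : nat) (e : rel 'I_n) : Prop :=
  symmetric e /\ irreflexive e.

Definition connected_graph (n : nat) (e : rel 'I_n) : Prop :=
  forall i j : 'I_n, connect e i j.

Definition adjmx (R : numDomainType) (n : nat) (e : rel 'I_n) : 'M[R]_n :=
  \matrix_(i, j) (e i j)%:R.

Definition degree (R : numDomainType) (n : nat) (e : rel 'I_n) (i : 'I_n) : R :=
  \sum_(j < n) adjmx R e i j.

Definition rwmx (R : numFieldType) (n : nat) (e : rel 'I_n) : 'M[R]_n :=
  \matrix_(i, j) (adjmx R e i j / degree R e j).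

Definition lazy_rw (R : numFieldType) (n : nat) (e : rel 'I_n) : 'M[R]_n :=
  2^-1 *: (1%:M + rwmx R e).

Definition agg_resp (R : numFieldType) (n : nat) (e : rel 'I_n)
  (x : 'cV[R]_n) (k : nat) (v : 'I_n) : R :=
  ((lazy_rw R e ^+ k) *m x) v 0.

Definition cmp_resp (R : numFieldType) (n : nat) (e : rel 'I_n)
  (x : 'cV[R]_n) (k1 k2 : nat) (v : 'I_n) : R :=
  ((lazy_rw R e ^+ k1 - lazy_rw R e ^+ k2) *m x) v 0.

(* maximum of a finite family of reals; the empty maximum is 0
   (weights are non-negative) *)
Definition maxw (R : realDomainType) (m : nat) (s : 'I_m -> R) : R :=
  \big[Num.max/0]_(i < m) s i.

From HB Require Import structures.
From mathcomp Require Import all_boot all_order all_algebra.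
From mathcomp Require Import reals.
From mathcomp Require Import ring lra.
Import Order.TTheory GRing.Theory Num.Theory.
Set Implicit Arguments. Unset Strict Implicit. Unset Printing Implicit Defensive.
Local Open Scope ring_scope.

(* Conjugating by the degree matrix D, P^k x = D Q^k (D^-1 x), where Q is
   row-stochastic with entries at least 1/(2n) on the diagonal and on the edges.
   By connectivity, n averaging steps put weight at least (2n)^-n on every
   vertex, so every n steps the oscillation of Q^k y shrinks by the factor
   1 - (2n)^-n / 2, while Q^k y stays above (2n)^-n times the mean of y.
   Hence for large k the differences (P^k1 - P^k2) x [v] are an arbitrarily
   small fraction of every P^k x [v]; with at most N comparison filters and
   band dominance this gives the claimed inequality. *)

Section Averaging.
Variables (R : realFieldType) (n : nat) (Q : 'I_n -> 'I_n -> R).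
Hypotheses (Q_ge0 : forall i j, 0 <= Q i j)
           (Q_row1 : forall i, \sum_(j < n) Q i j = 1).

Definition avg (y : 'I_n -> R) : 'I_n -> R := fun i => \sum_(j < n) Q i j * y j.

Lemma avg_ge (m : R) y : (forall j, m <= y j) -> forall i, m <= avg y i.
Proof.
move=> my i; rewrite /avg -[m]mul1r -(Q_row1 i) mulr_suml.
by apply: ler_sum => j _; apply: ler_wpM2l.
Qed.

Lemma iter_avg_ge (m : R) y : (forall j, m <= y j) -> forall k i, m <= iter k avg y i.
Proof. by move=> my; elim=> [|k IHk] i //=; apply: avg_ge. Qed.

Lemma iter_avgN (y : 'I_n -> R) k i : iter k avg (fun j => - y j) i = - iter k avg y i.
Proof.
elim: k i => [|k IHk] i //=; rewrite /avg -sumrN.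
by apply: eq_bigr => j _; rewrite IHk mulrN.
Qed.

Lemma iter_avg_le (M : R) y : (forall j, y j <= M) -> forall k i, iter k avg y i <= M.
Proof.
move=> yM k i; rewrite -lerN2 -iter_avgN.
by apply: iter_avg_ge => j; rewrite lerN2.
Qed.

Lemma avg_excess (m a : R) y i l : (forall j, m <= y j) -> 0 <= a -> a <= Q i l ->
  a * (y l - m) <= avg y i - m.
Proof.
move=> my a0 aQ.
have -> : avg y i - m = \sum_(j < n) Q i j * (y j - m).
  rewrite /avg -[X in _ - X]mul1r -(Q_row1 i) mulr_suml -sumrB.
  by apply: eq_bigr => j _; rewrite mulrBr.
rewrite (bigD1 l) //=; apply: le_trans (_ : Q i l * (y l - m) <= _).
  by apply: ler_wpM2r; rewrite ?subr_ge0.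
by rewrite lerDl sumr_ge0 // => j _; rewrite mulr_ge0 ?subr_ge0.
Qed.

Variables (e : rel 'I_n) (a : R).
Hypotheses (a_ge0 : 0 <= a) (Q_edge : forall i l, e i l -> a <= Q i l)
           (Q_diag : forall i, a <= Q i i) (e_connected : forall i j, connect e i j).

Lemma iter_avg_excess_path (m : R) y : (forall j, m <= y j) ->
  forall p i, path e i p ->
  a ^+ size p * (y (last i p) - m) <= iter (size p) avg y i - m.
Proof.
move=> my; elim=> [|l p IHp] i /=; first by rewrite mul1r.
case/andP=> eil pathp; rewrite exprS -mulrA.
apply: le_trans (avg_excess (iter_avg_ge my _) a_ge0 (Q_edge eil)).
by apply: ler_wpM2l => //; apply: IHp.
Qed.

Lemma iter_avg_excess_delay (m w : R) y s : (forall j, m <= y j) ->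
  forall d i, a ^+ s * w <= iter s avg y i - m ->
  a ^+ (s + d) * w <= iter (s + d) avg y i - m.
Proof.
move=> my; elim=> [|d IHd] i le_w; first by rewrite addn0.
rewrite addnS exprS -mulrA /=.
apply: le_trans (avg_excess (iter_avg_ge my _) a_ge0 (Q_diag i)).
by apply: ler_wpM2l => //; apply: IHd.
Qed.

(* Shortening a path from i to j to a simple one bounds its length by n;
   the lazy self-loops then pad it to exactly n steps. *)
Lemma iter_avg_excess (m : R) y : (forall j, m <= y j) ->
  forall i j, a ^+ n * (y j - m) <= iter n avg y i - m.
Proof.
move=> my i j; case/connectP: (e_connected i j) => p + ->.
case/shortenP=> p' pathp' uniqp' _.
have size_p' : (size p' <= n)%N.
  have := max_card (mem (i :: p')).
  by rewrite card_ord (card_uniqP uniqp') => /ltnW.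
have := iter_avg_excess_delay my (n - size p')%N (iter_avg_excess_path my pathp').
by rewrite subnKC.
Qed.

(* Every entry of Q^n y puts weight at least a^n on y v, which lies in one half
   of [m, M]; this keeps all entries away from the opposite end. *)
Lemma iter_avg_osc_contract (m M : R) y (v : 'I_n) :
  (forall j, m <= y j) -> (forall j, y j <= M) ->
  exists m' M', (forall i, m' <= iter n avg y i <= M')
    /\ M' - m' <= (1 - a ^+ n / 2) * (M - m).
Proof.
move=> my yM; have an_ge0 : 0 <= a ^+ n by apply: exprn_ge0.
have mM : m <= M by apply: le_trans (my v) (yM v).
have [mid_le|lt_mid] := lerP ((m + M) / 2) (y v).
  exists (m + a ^+ n * (y v - m)), M; split.
    move=> i; rewrite iter_avg_le // andbT.
    by have := iter_avg_excess my i v; lra.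
  have : a ^+ n * ((M - m) / 2) <= a ^+ n * (y v - m) by rewrite ler_wpM2l //; lra.
  lra.
exists m, (M - a ^+ n * (M - y v)); split.
  move=> i; rewrite iter_avg_ge //=.
  have Nmy : forall j, - M <= - y j by move=> j; rewrite lerN2.
  by have := iter_avg_excess Nmy i v; rewrite iter_avgN; lra.
have : a ^+ n * ((M - m) / 2) <= a ^+ n * (M - y v) by rewrite ler_wpM2l //; lra.
lra.
Qed.

Lemma weight_le1 (v : 'I_n) : a <= 1.
Proof.
apply: le_trans (Q_diag v) _.
by rewrite -(Q_row1 v) (bigD1 v) //= lerDl sumr_ge0.
Qed.

Lemma iter_avg_osc_le (y : 'I_n -> R) (v : 'I_n) t k k' : (forall j, 0 <= y j) ->
  (n * t <= k)%N -> (n * t <= k')%N ->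
  iter k avg y v - iter k' avg y v <= (1 - a ^+ n / 2) ^+ t * \sum_(j < n) y j.
Proof.
move=> y_ge0 tk tk'.
have an_le1 : a ^+ n <= 1 by rewrite exprn_ile1 // weight_le1.
have [m' [M' [bounds osc]]] : exists m' M',
    (forall i, m' <= iter (n * t) avg y i <= M')
    /\ M' - m' <= (1 - a ^+ n / 2) ^+ t * (\sum_(j < n) y j - 0).
  elim: t {tk tk'} => [|t [m' [M' [bounds osc]]]].
    exists 0, (\sum_(j < n) y j); rewrite muln0 expr0 mul1r; split => // i /=.
    by rewrite y_ge0 (bigD1 i) //= lerDl sumr_ge0.
  have [m'' [M'' [bounds' osc']]] := iter_avg_osc_contract v
    (fun j => (andP (bounds j)).1) (fun j => (andP (bounds j)).2).
  exists m'', M''; rewrite mulnS iterD; split => //.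
  apply: le_trans osc' _; rewrite exprS -mulrA ler_wpM2l //; lra.
have in_bounds k'' : (n * t <= k'')%N -> m' <= iter k'' avg y v <= M'.
  move=> tk''; rewrite -(subnK tk'') iterD.
  by rewrite iter_avg_ge ?iter_avg_le // => j; case/andP: (bounds j).
case/andP: (in_bounds _ tk) => _ le_k; case/andP: (in_bounds _ tk') => ge_k' _.
by rewrite subr0 in osc; lra.
Qed.

Lemma iter_avg_ge_mean (y : 'I_n -> R) k i : (forall j, 0 <= y j) -> (n <= k)%N ->
  a ^+ n * (\sum_(j < n) y j) / n%:R <= iter k avg y i.
Proof.
move=> y_ge0 nk; rewrite -(subnK nk) iterD; apply: iter_avg_ge => {}i.
have n_gt0 : (0 < n)%N := leq_ltn_trans (leq0n i) (ltn_ord i).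
rewrite ler_pdivrMr ?ltr0n // mulr_sumr mulr_natr -[X in _ *+ X]card_ord.
rewrite -sumr_const; apply: ler_sum => j _.
by have := iter_avg_excess y_ge0 i j; rewrite !subr0.
Qed.

End Averaging.

Lemma geometric_eventually_le (R : archiRealFieldType) (u d : R) :
  0 < u -> u <= 1 -> 0 < d -> exists t, (1 - u) ^+ t <= d.
Proof.
move=> u_gt0 u_le1 d_gt0.
have [t lt_t] : exists t, (d * u)^-1 < t%:R.
  by exists (Num.bound (d * u)^-1); rewrite archi_boundP // invr_ge0 ltW ?mulr_gt0.
exists t.
have bernoulli : (1 - u) ^+ t * (1 + t%:R * u) <= 1.
  elim: (t) => [|s IHs]; first by rewrite expr0 mul1r mul0r addr0.
  have us : 0 <= s%:R * u by rewrite mulr_ge0 // ltW.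
  have pow_ge0 : 0 <= (1 - u) ^+ s by rewrite exprn_ge0 // subr_ge0.
  apply: le_trans IHs; rewrite exprSr -mulrA ler_wpM2l // -natr1; nra.
have : d^-1 < t%:R * u.
  have : (d * u)^-1 * u < t%:R * u by rewrite ltr_pM2r.
  by rewrite invfM mulfVK ?lt0r_neq0.
have : 0 < d^-1 by rewrite invr_gt0.
have : 0 <= (1 - u) ^+ t by rewrite exprn_ge0 // subr_ge0.
move: bernoulli; set p := (1 - u) ^+ t; set w := t%:R * u => bern p_ge0 dV_gt0 lt_w.
rewrite -[d]invrK -(ler_pM2r dV_gt0) mulVf ?lt0r_neq0 //; nra.
Qed.

Lemma iter_avg_settles (R : archiRealFieldType) n (Q : 'I_n -> 'I_n -> R)
    (e : rel 'I_n) (a : R) (y : 'I_n -> R) (v : 'I_n) (delta : R) :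
  (forall i j, 0 <= Q i j) -> (forall i, \sum_(j < n) Q i j = 1) -> 0 < a ->
  (forall i l, e i l -> a <= Q i l) -> (forall i, a <= Q i i) ->
  (forall i j, connect e i j) -> (forall j, 0 <= y j) -> 0 < delta ->
  exists K L, 0 <= L /\ (forall k, (K <= k)%N -> L <= iter k (avg Q) y v) /\
    (forall k k', (K <= k)%N -> (K <= k')%N ->
       iter k (avg Q) y v - iter k' (avg Q) y v <= delta * L).
Proof.
move=> Q_ge0 Q_row1 a_gt0 Q_edge Q_diag e_conn y_ge0 delta_gt0.
have n_gt0 : (0 < n)%N := leq_ltn_trans (leq0n v) (ltn_ord v).
have an_gt0 : 0 < a ^+ n by rewrite exprn_gt0.
have an_le1 : a ^+ n <= 1.
  by apply: exprn_ile1; [apply: ltW | apply: (weight_le1 Q_ge0 Q_row1 Q_diag v)].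
have S_ge0 : 0 <= \sum_(j < n) y j by rewrite sumr_ge0.
have [t small_t] : exists t, (1 - a ^+ n / 2) ^+ t <= delta * a ^+ n / n%:R.
  by apply: geometric_eventually_le; rewrite ?divr_gt0 ?mulr_gt0 ?ltr0n //; lra.
exists (n * t + n)%N, (a ^+ n * (\sum_(j < n) y j) / n%:R); split; last split.
- by rewrite divr_ge0 ?ler0n // mulr_ge0 // ltW.
- move=> k le_k; apply: (iter_avg_ge_mean Q_ge0 Q_row1 (ltW a_gt0) Q_edge) => //.
  exact: leq_trans (leq_addl _ _) le_k.
- move=> k k' le_k le_k'.
  apply: le_trans (iter_avg_osc_le Q_ge0 Q_row1 (ltW a_gt0) Q_edge Q_diag e_conn v
    y_ge0 (leq_trans (leq_addr _ _) le_k) (leq_trans (leq_addr _ _) le_k')) _.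
  have -> : delta * (a ^+ n * (\sum_(j < n) y j) / n%:R) =
            delta * a ^+ n / n%:R * \sum_(j < n) y j by ring.
  exact: ler_wpM2r.
Qed.

Lemma adjmx_ge0 (R : numDomainType) n (e : rel 'I_n) i j : 0 <= adjmx R e i j.
Proof. by rewrite mxE ler0n. Qed.

Lemma degree_le (R : numDomainType) n (e : rel 'I_n) i : degree R e i <= n%:R.
Proof.
rewrite /degree -[n in n%:R]card_ord -sumr_const.
by apply: ler_sum => j _; rewrite mxE lern1 leq_b1.
Qed.

Lemma degree_ge1 (R : numDomainType) n (e : rel 'I_n) i l :
  e i l -> 1 <= degree R e i.
Proof.
move=> eil; rewrite /degree (bigD1 l) //= mxE eil.
by rewrite lerDl sumr_ge0 // => j _; apply: adjmx_ge0.
Qed.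

Lemma degree_gt0 (R : numDomainType) n (e : rel 'I_n) :
  (1 < n)%N -> connected_graph e -> forall i, 0 < degree R e i.
Proof.
move=> n_gt1 e_conn i.
have [j neq_ji] : exists j : 'I_n, j != i.
  have [->|neq_i1] := eqVneq i (Ordinal n_gt1).
    by exists (Ordinal (ltnW n_gt1)); apply/eqP => -[].
  by exists (Ordinal n_gt1); rewrite eq_sym.
case/connectP: (e_conn i j) => [[|l p]] /=.
  by move=> _ eq_ji; rewrite eq_ji eqxx in neq_ji.
by case/andP=> eil _ _; apply: lt_le_trans (degree_ge1 R eil).
Qed.

Section LazyWalk.
Variables (R : realFieldType) (n : nat) (e : rel 'I_n).
Hypothesis deg_gt0 : forall i, 0 < degree R e i.

(* With D = diag(degree), the lazy walk factors as P = D Q D^-1, where Q below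
   is a row-stochastic matrix. *)
Definition lazy_kernel (i j : 'I_n) : R :=
  (i == j)%:R / 2 + adjmx R e i j / (2 * degree R e i).

Lemma lazy_kernel_ge0 i j : 0 <= lazy_kernel i j.
Proof.
by rewrite addr_ge0 ?divr_ge0 ?ler0n ?adjmx_ge0 ?mulr_ge0 ?ler0n ?ltW.
Qed.

Lemma lazy_kernel_row1 i : \sum_(j < n) lazy_kernel i j = 1.
Proof.
rewrite big_split /= -!mulr_suml (bigD1 i) //= eqxx big1 ?addr0; last first.
  by move=> j /negbTE; rewrite eq_sym => ->.
rewrite -/(degree R e i) /=; field; exact: lt0r_neq0.
Qed.

Lemma lazy_kernel_diag i : (2 * n%:R)^-1 <= lazy_kernel i i.
Proof.
have n_gt0 : (0 < n)%N := leq_ltn_trans (leq0n i) (ltn_ord i).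
rewrite /lazy_kernel eqxx mul1r -[X in X <= _]addr0 lerD //; last first.
  by rewrite divr_ge0 ?adjmx_ge0 ?mulr_ge0 ?ler0n ?ltW.
by rewrite lef_pV2 ?posrE ?mulr_gt0 ?ltr0n // ler_peMr // ler1n.
Qed.

Lemma lazy_kernel_edge i l : e i l -> (2 * n%:R)^-1 <= lazy_kernel i l.
Proof.
move=> eil; rewrite /lazy_kernel mxE eil mul1r -[X in X <= _]add0r lerD //.
  by rewrite divr_ge0 ?ler0n.
rewrite lef_pV2 ?posrE ?mulr_gt0 ?ltr0n ?deg_gt0 //; last first.
  exact: leq_ltn_trans (leq0n i) (ltn_ord i).
by rewrite ler_pM2l ?ltr0n // degree_le.
Qed.

Lemma lazy_rw_expE (x : 'cV[R]_n) k i :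
  ((lazy_rw R e ^+ k) *m x) i 0 =
    degree R e i * iter k (avg lazy_kernel) (fun j => x j 0 / degree R e j) i.
Proof.
elim: k i => [|k IHk] i.
  by rewrite expr0 mul1mx /= mulrC divfK // lt0r_neq0.
rewrite exprS -mulmxA mxE /= /avg mulr_sumr; apply: eq_bigr => j _.
rewrite IHk; set z := iter k _ _ j; rewrite /lazy_rw /rwmx /lazy_kernel !mxE.
have := lt0r_neq0 (deg_gt0 i); have := lt0r_neq0 (deg_gt0 j).
by case: (eqVneq i j) => [<-|_] /= dj di; rewrite ?mul0r ?add0r; field; rewrite ?dj ?di.
Qed.

End LazyWalk.

Lemma cmp_respE (R : realFieldType) n (e : rel 'I_n) (x : 'cV[R]_n) k1 k2 v :
  cmp_resp e x k1 k2 v = agg_resp e x k1 v - agg_resp e x k2 v.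
Proof. by rewrite /cmp_resp /agg_resp mulmxBl !mxE. Qed.

Lemma agg_resp_settles (R : archiRealFieldType) n (e : rel 'I_n)
    (x : 'cV[R]_n) (v : 'I_n) (delta : R) :
  (1 < n)%N -> connected_graph e -> (forall i, 0 <= x i 0) -> 0 < delta ->
  exists K lo, 0 <= lo /\ (forall k, (K <= k)%N -> lo <= agg_resp e x k v) /\
    (forall k1 k2, (K <= k1)%N -> (K <= k2)%N ->
       cmp_resp e x k1 k2 v <= delta * lo).
Proof.
move=> n_gt1 e_conn x_ge0 delta_gt0.
have deg_gt0 := degree_gt0 R n_gt1 e_conn.
have y_ge0 : forall j, 0 <= x j 0 / degree R e j.
  by move=> j; rewrite divr_ge0 ?x_ge0 ?ltW.
have a_gt0 : 0 < (2 * n%:R)^-1 :> R by rewrite invr_gt0 mulr_gt0 ?ltr0n // ltnW.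
have [K [L [L_ge0 [L_le osc_le]]]] := iter_avg_settles v (lazy_kernel_ge0 deg_gt0)
  (lazy_kernel_row1 deg_gt0) a_gt0 (lazy_kernel_edge deg_gt0)
  (lazy_kernel_diag deg_gt0) e_conn y_ge0 delta_gt0.
have deg_ge0 := ltW (deg_gt0 v).
exists K, (degree R e v * L); split; last split.
- exact: mulr_ge0.
- by move=> k le_k; rewrite /agg_resp lazy_rw_expE // ler_wpM2l ?L_le.
- move=> k1 k2 le_k1 le_k2; rewrite cmp_respE /agg_resp !lazy_rw_expE //.
  by rewrite -mulrBr mulrCA ler_wpM2l ?osc_le.
Qed.

Lemma maxw_le_sum (R : realDomainType) m (s : 'I_m -> R) :
  (forall i, 0 <= s i) -> maxw s <= \sum_(i < m) s i.
Proof.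
move=> s_ge0; apply/bigmax_leP; split; first exact: sumr_ge0.
by move=> i _; rewrite (bigD1 i) //= lerDl sumr_ge0.
Qed.

(* At most [N] comparison terms, each at most [hi], weighted by at most
   [maxw sC = c * maxw sA]; the aggregation side is at least [lo] times the
   total aggregation weight, which dominates [maxw sA]. *)
Lemma band_dominance_le (R : realDomainType) (a b N : nat) (sA hA : 'I_a -> R)
    (sC hC : 'I_b -> R) (c eps lo hi : R) :
  (b <= N)%N -> (forall i, 0 <= sA i) -> (forall j, 0 <= sC j) ->
  0 <= c -> 0 <= eps -> 0 <= lo -> 0 <= hi ->
  (forall i, lo <= hA i) -> (forall j, hC j <= hi) -> N%:R * hi <= eps * lo ->
  maxw sC = c * maxw sA ->
  \sum_(j < b) sC j * hC j <= eps * c * \sum_(i < a) sA i * hA i.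
Proof.
move=> bN sA_ge0 sC_ge0 c_ge0 eps_ge0 lo_ge0 hi_ge0 hA_ge hC_le hi_lo dom.
have maxA_ge0 : 0 <= maxw sA by apply: bigmax_ge_id.
have maxC_ge0 : 0 <= maxw sC by apply: bigmax_ge_id.
apply: le_trans (_ : \sum_(j < b) maxw sC * hi <= _).
  apply: ler_sum => j _; apply: le_trans (ler_wpM2l (sC_ge0 j) (hC_le j)) _.
  by apply: ler_wpM2r => //; apply: le_bigmax.
rewrite sumr_const card_ord -mulr_natl mulrCA.
apply: le_trans (_ : maxw sC * (N%:R * hi) <= _).
  by rewrite ler_wpM2l // ler_wpM2r // ler_nat.
apply: le_trans (_ : c * maxw sA * (eps * lo) <= _).
  by rewrite dom ler_wpM2l ?mulr_ge0.
apply: le_trans (_ : eps * c * (lo * \sum_(i < a) sA i) <= _).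
  have -> : c * maxw sA * (eps * lo) = eps * c * (lo * maxw sA) by ring.
  by rewrite ler_wpM2l ?mulr_ge0 // ler_wpM2l // maxw_le_sum.
rewrite ler_wpM2l ?mulr_ge0 // mulr_sumr.
by apply: ler_sum => i _; rewrite mulrC ler_wpM2l.
Qed.

Theorem theorem1 (R : realType) (n : nat) (e : rel 'I_n)
  (v : 'I_n) (x : 'cV[R]_n) (c : R) (N : nat) (eps : R) :
  (1 < n)%N -> simple_graph e -> connected_graph e ->
  (forall i, 0 <= x i 0) -> 1 < c -> (0 < N)%N -> 0 < eps ->
  exists K : nat,
    forall (a b : nat) (kA : 'I_a -> nat) (kC : 'I_b -> nat * nat)
           (sA : 'I_a -> R) (sC : 'I_b -> R),
      (0 < a + b)%N ->
      (forall i, (K <= kA i)%N) ->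
      (forall j, (kC j).1 != (kC j).2 /\ (K <= (kC j).1)%N /\ (K <= (kC j).2)%N) ->
      (b <= N)%N ->
      (forall i, 0 <= sA i) -> (forall j, 0 <= sC j) ->
      maxw sC = c * maxw sA ->
      \sum_(j < b) sC j * cmp_resp e x (kC j).1 (kC j).2 v
        <= eps * c * \sum_(i < a) sA i * agg_resp e x (kA i) v.
Proof.
move=> n_gt1 _ e_conn x_ge0 c_gt1 N_gt0 eps_gt0.
have N_posR : 0 < N%:R :> R by rewrite ltr0n.
have [K [lo [lo_ge0 [agg_ge cmp_le]]]] :=
  agg_resp_settles v n_gt1 e_conn x_ge0 (divr_gt0 eps_gt0 N_posR).
exists K => a b kA kC sA sC _ kA_ge kC_ge bN sA_ge0 sC_ge0 dom.
apply: (band_dominance_le (N := N) (lo := lo) (hi := eps / N%:R * lo)) => //.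
- exact: le_trans ler01 (ltW c_gt1).
- exact: ltW.
- by rewrite mulr_ge0 // divr_ge0 // ltW.
- by move=> i; apply: agg_ge.
- by move=> j; have [_ [le_k1 le_k2]] := kC_ge j; apply: cmp_le.
- by rewrite mulrA mulrCA mulfV ?lt0r_neq0 // mulr1.
Qed.
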